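(* For every compact set $V\subset\mathcal{A}_0$, $$\mathrm{bor}(V^* )=V^*\setminus(\mathrm{cm}(V))^T.$$
   Context: $D=\{z:|z|<1\}$, $\overline D$ its closure. $\mathcal{A}$ is the space of functions $f(z)=\sum_{k\ge0}a_k(f)z^k$ analytic in $D$, with the topology of locally uniform convergence; $\mathcal{A}_0=\{f\in\mathcal{A}: a_0(f)=1\}$. $\mathcal{A}(\overline D)$ is the set of functions analytic in some disk $\{|z|<R\}$ with $R>1$, and $\mathcal{A}_0(\overline D)=\{g\in\mathcal{A}(\overline D):a_0(g)=1\}$. The Hadamard product is $(f*g)(z)=\sum_{k\ge0}a_k(f)a_k(g)z^k$. For $V\subset\mathcal{A}_0$, $V^*=\{g\in\mathcal{A}_0:(f*g)(z)\ne0 \ \forall z\in D,\ \forall f\in V\}$ and $V^T=\{g\in\mathcal{A}_0(\overline D): (f*g)(1)\ne0 \ \forall f\in V\}$. For $x\in\overline D$, $(P_xf)(z)=f(xz)$, and $\mathrm{cm}(V)=\{P_xf:f\in V,\ x\in\overline D\}$. Let $e\equiv1$. For $W\subset\mathcal{A}_0$ with $W\ne\{e\}$, $f\in W$ is a border element of $W$ if whenever $f=P_xg$ with $g\in W$, $x\in\overline D$, then $|x|=1$; $\mathrm{bor}(W)$ is the set of border elements; if $W=\{e\}$, $\mathrm{bor}(W)=\{e\}$. *)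

From Stdlib Require Import Reals List.
From Coquelicot Require Import Coquelicot.
Open Scope R_scope.

(* A function analytic in D is represented by its Taylor coefficient sequence
   a : nat -> C, with f(z) = sum_k a_k z^k. *)
Definition coef := nat -> C.

Definition CSeries (u : nat -> C) : C :=
  (Series (fun k => fst (u k)), Series (fun k => snd (u k))).

Definition evalA (a : coef) (z : C) : C := CSeries (fun k => Cmult (a k) (pow_n z k)).

Definition inA (a : coef) : Prop :=
  forall z : C, Cmod z < 1 -> ex_series (fun k => Cmult (a k) (pow_n z k)).

Definition inA0 (a : coef) : Prop := inA a /\ a 0%nat = RtoC 1.

(* A(closed D): analytic in some disc |z| < R with R > 1 *)
Definition inAbar (a : coef) : Prop :=
  exists R : R, 1 < R /\
    forall z : C, Cmod z < R -> ex_series (fun k => Cmult (a k) (pow_n z k)).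

Definition inAbar0 (a : coef) : Prop := inAbar a /\ a 0%nat = RtoC 1.

Definition hadamard (f g : coef) : coef := fun k => Cmult (f k) (g k).

Definition e_fun : coef := fun k => match k with O => RtoC 1 | _ => RtoC 0 end.

(* P_x f (z) = f (x z) *)
Definition Px (x : C) (f : coef) : coef := fun k => Cmult (f k) (pow_n x k).

Definition dual_star (V : coef -> Prop) : coef -> Prop :=
  fun g => inA0 g /\
    forall f, V f -> forall z : C, Cmod z < 1 -> evalA (hadamard f g) z <> RtoC 0.

Definition dual_T (V : coef -> Prop) : coef -> Prop :=
  fun g => inAbar0 g /\ forall f, V f -> evalA (hadamard f g) (RtoC 1) <> RtoC 0.

Definition cm (V : coef -> Prop) : coef -> Prop :=
  fun h => exists f x, V f /\ Cmod x <= 1 /\ h = Px x f.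

Definition is_border (W : coef -> Prop) (f : coef) : Prop :=
  W f /\ forall g x, W g -> Cmod x <= 1 -> f = Px x g -> Cmod x = 1.

Definition bor (W : coef -> Prop) : coef -> Prop :=
  fun f => ((forall h, W h <-> h = e_fun) /\ f = e_fun)
        \/ (~ (forall h, W h <-> h = e_fun) /\ is_border W f).

(* Topology of locally uniform convergence on D (on the space A).
   Basic neighbourhoods: {g in A : |g(z) - f(z)| < eps for all |z| <= r}, r < 1. *)
Definition openA (U : coef -> Prop) : Prop :=
  forall f, U f -> inA f /\
    exists r eps : R, 0 <= r < 1 /\ 0 < eps /\
      forall g, inA g ->
        (forall z : C, Cmod z <= r -> Cmod (Cminus (evalA g z) (evalA f z)) < eps) ->
        U g.

Definition compactA (K : coef -> Prop) : Prop :=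
  (forall f, K f -> inA f) /\
  forall (I : Type) (U : I -> coef -> Prop),
    (forall i, openA (U i)) ->
    (forall f, K f -> exists i, U i f) ->
    exists l : list I, forall f, K f -> exists i, In i l /\ U i f.

(* For compact [V], all [f] in [V] are zero-free on a common disc [|z| <= rho],
   so [sum rho^k z^k] lies in [V^*] and [V^* <> {e}]; only the second clause of [bor] matters.

   If [g = P_x g'] with [|x| < 1] and [g'] in [V^*], then [g] is analytic beyond the closed
   disc and [(P_y f * g)(1) = (f * g')(x y) <> 0] for [|y| <= 1], so [g] is in [cm(V)^T].
   Conversely, if [g] is in [V^*] and in [cm(V)^T], every [f * g] ([f] in [V]) is analytic on
   a disc of radius [> 1] and zero-free on the closed unit disc.  The map [f |-> f * g] is
   continuous uniformly on a slightly larger disc, so by compactness of [V] and of the closed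
   disc there is one [s > 1] with all [f * g] zero-free on [|w| < s].  Then [P_s g] is in [V^*]
   and [g = P_(1/s) (P_s g)], so [g] is not a border element.

   Coefficients are controlled by sup norms through a discrete Cauchy estimate: averaging
   [a(r w^j) w^(-jk)] over the [N]-th roots of unity [w^j] gives [a_k r^k] up to an aliasing
   error that tends to [0] as [N] grows. *)

From Stdlib Require Import Reals List Lra Lia FunctionalExtensionality.
From Coquelicot Require Import Coquelicot.
Open Scope R_scope.

Notation is_CSeries := (@is_series C_AbsRing C_NormedModule).
Notation ex_CSeries := (@ex_series C_AbsRing C_NormedModule).

(* [ring] only recognises [C] syntactically: Coquelicot's generic operations are folded back
   to [Cplus], [Cmult], ... and the [pow_n] and [sum_n] subterms are abstracted as atoms. *)
Ltac ring_C :=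
  repeat match goal with
    | |- context [@plus ?G ?x ?y] => change (@plus G x y) with (Cplus x y)
    | |- context [@minus ?G ?x ?y] => change (@minus G x y) with (Cminus x y)
    | |- context [@opp ?G ?x] => change (@opp G x) with (Copp x)
    | |- context [@mult C_Ring ?x ?y] => change (@mult C_Ring x y) with (Cmult x y)
    | |- context [@one C_Ring] => change (@one C_Ring) with (RtoC 1)
    end;
  match goal with |- ?a = ?b => change (@eq C a b) end;
  repeat match goal with
    | |- context [@pow_n C_Ring ?z ?k] =>
      let t := fresh "t" in set (t := @pow_n C_Ring z k); clearbody t; change C in t
    | |- context [@sum_n ?G ?u ?k] =>
      let t := fresh "t" in set (t := @sum_n G u k); clearbody t; change C in t
    end;
  ring.

Lemma sum_n_fst (u : nat -> C) n : fst (sum_n u n) = sum_n (fun k => fst (u k)) n.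
Proof.
  induction n as [|n IH]; [now rewrite !sum_O|].
  rewrite !sum_Sn; simpl; rewrite <- IH; reflexivity.
Qed.

Lemma sum_n_snd (u : nat -> C) n : snd (sum_n u n) = sum_n (fun k => snd (u k)) n.
Proof.
  induction n as [|n IH]; [now rewrite !sum_O|].
  rewrite !sum_Sn; simpl; rewrite <- IH; reflexivity.
Qed.

Lemma is_series_fst (u : nat -> C) l :
  is_CSeries u l -> is_series (fun k => fst (u k)) (fst l).
Proof.
  intros H. eapply filterlim_ext; [intros n; apply sum_n_fst|].
  eapply filterlim_comp; [exact H|].
  intros P [eps HP]. exists eps. intros y Hy. exact (HP _ (proj1 Hy)).
Qed.

Lemma is_series_snd (u : nat -> C) l :
  is_CSeries u l -> is_series (fun k => snd (u k)) (snd l).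
Proof.
  intros H. eapply filterlim_ext; [intros n; apply sum_n_snd|].
  eapply filterlim_comp; [exact H|].
  intros P [eps HP]. exists eps. intros y Hy. exact (HP _ (proj2 Hy)).
Qed.

Lemma CSeries_unique u l : is_CSeries u l -> CSeries u = l.
Proof.
  intros H. unfold CSeries.
  rewrite (is_series_unique _ _ (is_series_fst _ _ H)), (is_series_unique _ _ (is_series_snd _ _ H)).
  now destruct l.
Qed.

Lemma CSeries_correct u : ex_CSeries u -> is_CSeries u (CSeries u).
Proof. intros [l Hl]. now rewrite (CSeries_unique _ _ Hl). Qed.

Lemma CSeries_ext u v : (forall k, u k = v k) -> CSeries u = CSeries v.
Proof. intros H. now rewrite (functional_extensionality _ _ H). Qed.

Lemma is_CSeries_scal (c : C) u l : is_CSeries u l -> is_CSeries (fun k => Cmult c (u k)) (Cmult c l).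
Proof. exact (is_series_scal_l c u l). Qed.

Lemma sum_n_Cmult_l (c : C) (u : nat -> C) n :
  sum_n (fun k => Cmult c (u k)) n = Cmult c (sum_n u n).
Proof. exact (sum_n_mult_l (K := C_Ring) c u n). Qed.

Lemma Cmod_sum_n_le (u : nat -> C) (b : nat -> R) n :
  (forall k, Cmod (u k) <= b k) -> Cmod (sum_n u n) <= sum_n b n.
Proof.
  intros Hb. induction n as [|n IH]; [rewrite !sum_O; apply Hb|].
  rewrite !sum_Sn. eapply Rle_trans; [apply Cmod_triangle|].
  apply Rplus_le_compat; auto.
Qed.

Lemma is_CSeries_Cmod_le u l (b : nat -> R) lb :
  is_CSeries u l -> (forall k, Cmod (u k) <= b k) -> is_series b lb -> Cmod l <= lb.
Proof.
  intros Hu Hb Hl.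
  assert (Hn : is_lim_seq (fun n => Cmod (sum_n u n)) (Cmod l)).
  { exact (filterlim_comp _ _ _ (sum_n u) norm _ _ _ Hu (filterlim_norm l)). }
  assert (Hb' : is_lim_seq (sum_n b) lb) by exact Hl.
  exact (is_lim_seq_le _ _ _ _ (fun n => Cmod_sum_n_le u b n Hb) Hn Hb').
Qed.

Lemma is_CSeries_geom u M q : 0 <= q < 1 -> (forall k, Cmod (u k) <= M * q ^ k) ->
  exists l, is_CSeries u l /\ Cmod l <= M / (1 - q).
Proof.
  intros Hq Hb.
  assert (G : is_series (fun k => M * q ^ k) (M * / (1 - q))).
  { apply (is_series_scal_l (K:=R_AbsRing) M (fun k => q ^ k)), is_series_geom.
    rewrite Rabs_pos_eq; lra. }
  destruct (@ex_series_le C_AbsRing C_CompleteNormedModule u _ Hb) as [l Hl];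
    [eexists; exact G|].
  exists l. split; [exact Hl | exact (is_CSeries_Cmod_le _ _ _ _ Hl Hb G)].
Qed.

Lemma ex_CSeries_terms_bounded u : ex_CSeries u -> exists M, forall k, Cmod (u k) <= M.
Proof.
  intros Hu. destruct (filterlim_bounded (sum_n u) Hu) as [M HM].
  exists (2 * M). intros [|k].
  - pose proof (HM 0%nat) as H0. rewrite sum_O in H0.
    pose proof (Cmod_ge_0 (u 0%nat)). change (Cmod (u 0%nat) <= M) in H0. lra.
  - replace (u (S k)) with (Cminus (sum_n u (S k)) (sum_n u k)) by (rewrite sum_Sn; ring_C).
    unfold Cminus. eapply Rle_trans; [apply Cmod_triangle|]. rewrite Cmod_opp.
    pose proof (HM (S k)). pose proof (HM k). change norm with Cmod in *. lra.
Qed.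

Lemma is_CSeries_delta (x : C) k : is_CSeries (fun n => if Nat.eqb n k then x else RtoC 0) x.
Proof.
  assert (E : forall n, sum_n (fun n => if Nat.eqb n k then x else RtoC 0) n =
                        if Nat.ltb n k then RtoC 0 else x).
  { induction n as [|n IH]; [rewrite sum_O; now destruct k|].
    rewrite sum_Sn, IH.
    destruct (Nat.ltb_spec n k), (Nat.eqb_spec (S n) k), (Nat.ltb_spec (S n) k);
      try lia; ring_C. }
  apply (filterlim_ext_loc (fun _ => x)); [|apply filterlim_const].
  exists k. intros n Hn. rewrite E. destruct (Nat.ltb_spec n k); [lia|reflexivity].
Qed.

Lemma is_CSeries_sum_n (u : nat -> nat -> C) (l : nat -> C) J :
  (forall j, is_CSeries (u j) (l j)) -> is_CSeries (fun n => sum_n (fun j => u j n) J) (sum_n l J).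
Proof.
  intros H. induction J as [|J IH].
  - rewrite sum_O. eapply is_series_ext; [|apply (H 0%nat)]. intros n. now rewrite sum_O.
  - rewrite sum_Sn. eapply is_series_ext; [|apply (is_series_plus _ _ _ _ IH (H (S J)))].
    intros n. now rewrite sum_Sn.
Qed.

Lemma Cmod_RtoC_nonneg (r : R) : 0 <= r -> Cmod (RtoC r) = r.
Proof. intros H. rewrite Cmod_R. now apply Rabs_pos_eq. Qed.

Lemma RtoC_mult (r s : R) : RtoC (r * s) = Cmult (RtoC r) (RtoC s).
Proof. unfold RtoC, Cmult. simpl. f_equal; ring. Qed.

Lemma Cmod_pow_n (z : C) k : Cmod (pow_n z k) = Cmod z ^ k.
Proof.
  induction k as [|k IH]; [apply Cmod_1|].
  simpl. rewrite <- IH. apply Cmod_mult.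
Qed.

Lemma pow_n_Cmult (a b : C) k : pow_n (Cmult a b) k = Cmult (pow_n a k) (pow_n b k).
Proof. induction k as [|k IH]; simpl; [|rewrite IH]; ring_C. Qed.

Lemma pow_n_one k : pow_n (RtoC 1) k = RtoC 1.
Proof. induction k as [|k IH]; simpl; [|rewrite IH]; ring_C. Qed.

Lemma pow_n_RtoC (r : R) k : pow_n (RtoC r) k = RtoC (r ^ k).
Proof. induction k as [|k IH]; [reflexivity|]. simpl. now rewrite IH, RtoC_mult. Qed.

Lemma pow_n_pow_n (z : C) a j : pow_n (pow_n z a) j = pow_n z (a * j).
Proof.
  induction j as [|j IH]; [now rewrite Nat.mul_0_r|].
  replace (a * S j)%nat with (a + a * j)%nat by lia.
  now rewrite pow_n_plus, <- IH.
Qed.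

Notation ps_terms a z := (fun k => Cmult (a k) (pow_n z k)).

Definition coef_bound (a : coef) (t M : R) : Prop := forall k, Cmod (a k) * t ^ k <= M.

Lemma coef_bound_ge0 a t M : coef_bound a t M -> 0 <= M.
Proof. intros H. specialize (H 0%nat). pose proof (Cmod_ge_0 (a 0%nat)). simpl in H. lra. Qed.

Lemma ex_CSeries_coef_bound (a : coef) (z : C) :
  ex_CSeries (ps_terms a z) -> exists M, coef_bound a (Cmod z) M.
Proof.
  intros H. destruct (ex_CSeries_terms_bounded _ H) as [M HM].
  exists M. intros k. rewrite <- Cmod_pow_n, <- Cmod_mult. apply HM.
Qed.

Lemma inA_coef_bound (a : coef) s : inA a -> 0 <= s < 1 -> exists M, coef_bound a s M.
Proof.
  intros Ha Hs. rewrite <- (Cmod_RtoC_nonneg s) by lra.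
  apply ex_CSeries_coef_bound, Ha. rewrite Cmod_RtoC_nonneg; lra.
Qed.

Lemma coef_bound_rescale a t M rho k : coef_bound a t M -> 0 < t -> 0 <= rho ->
  Cmod (a k) * rho ^ k <= M * (rho / t) ^ k.
Proof.
  intros H Ht Hr.
  replace (Cmod (a k) * rho ^ k) with ((Cmod (a k) * t ^ k) * (rho / t) ^ k)
    by (rewrite Rmult_assoc, <- Rpow_mult_distr; do 3 f_equal; field; lra).
  apply Rmult_le_compat_r; [apply pow_le, Rdiv_le_0_compat; lra | apply H].
Qed.

Lemma Cmod_term_le a t M rho (w : C) k : coef_bound a t M -> 0 < t -> Cmod w <= rho ->
  Cmod (Cmult (a k) (pow_n w k)) <= M * (rho / t) ^ k.
Proof.
  intros H Ht Hw. pose proof (Cmod_ge_0 w).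
  rewrite Cmod_mult, Cmod_pow_n. apply Rle_trans with (Cmod (a k) * rho ^ k).
  - apply Rmult_le_compat_l; [apply Cmod_ge_0 | apply pow_incr; lra].
  - apply (coef_bound_rescale a t); auto; lra.
Qed.

Lemma evalA_coef_bound a t M rho (w : C) :
  coef_bound a t M -> 0 < t -> Cmod w <= rho -> rho < t ->
  is_CSeries (ps_terms a w) (evalA a w) /\ Cmod (evalA a w) <= M / (1 - rho / t).
Proof.
  intros H Ht Hw Hr. pose proof (Cmod_ge_0 w).
  destruct (is_CSeries_geom (ps_terms a w) M (rho / t)) as [l [Hl Hb]].
  - split; [apply Rdiv_le_0_compat | apply (Rdiv_lt_1 _ t)]; lra.
  - intros k. now apply Cmod_term_le.
  - unfold evalA. rewrite (CSeries_unique _ _ Hl). auto.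
Qed.

Lemma coef_bound_hadamard (a g : coef) r R' A G : 0 <= r -> 0 <= R' ->
  coef_bound a r A -> coef_bound g R' G -> coef_bound (hadamard a g) (r * R') (A * G).
Proof.
  intros Hr HR Ha Hg k. unfold hadamard. rewrite Cmod_mult, Rpow_mult_distr.
  replace (Cmod (a k) * Cmod (g k) * (r ^ k * R' ^ k))
    with ((Cmod (a k) * r ^ k) * (Cmod (g k) * R' ^ k)) by ring.
  pose proof (Cmod_ge_0 (a k)). pose proof (Cmod_ge_0 (g k)).
  apply Rmult_le_compat; auto; apply Rmult_le_pos; auto; apply pow_le; auto.
Qed.

Definition cis (x : R) : C := (cos x, sin x).

Lemma pow_n_cis x m : pow_n (cis x) m = cis (INR m * x).
Proof.
  induction m as [|m IH].
  - unfold cis. simpl. rewrite Rmult_0_l, cos_0, sin_0. reflexivity.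
  - change (pow_n (cis x) (S m)) with (Cmult (cis x) (pow_n (cis x) m)).
    rewrite IH, S_INR. unfold cis, Cmult. cbn [fst snd].
    replace ((INR m + 1) * x) with (x + INR m * x) by ring.
    rewrite cos_plus, sin_plus. f_equal; ring.
Qed.

Lemma Cmod_cis x : Cmod (cis x) = 1.
Proof.
  unfold Cmod, cis. cbn [fst snd]. rewrite <- sqrt_1. f_equal.
  pose proof (sin2_cos2 x) as H. unfold Rsqr in H. simpl. lra.
Qed.

Lemma cos_lt_1 x : 0 < x < 2 * PI -> cos x < 1.
Proof.
  intros H. replace x with (2 * (x / 2)) by field. rewrite cos_2a_sin.
  assert (0 < sin (x / 2)) by (apply sin_gt_0; lra). nra.
Qed.

Lemma cis_neq_1 x : 0 < x < 4 * PI -> x <> 2 * PI -> cis x <> RtoC 1.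
Proof.
  intros Hx Hne Habs. apply (f_equal fst) in Habs. cbn in Habs.
  destruct (Rlt_or_le x (2 * PI)) as [Hlt|Hge].
  - pose proof (cos_lt_1 x). lra.
  - assert (E : cos x = cos (x - 2 * PI)).
    { rewrite <- (cos_period (x - 2 * PI) 1). f_equal. simpl. ring. }
    pose proof (cos_lt_1 (x - 2 * PI)). lra.
Qed.

Definition root_of_unity (N : nat) : C := cis (2 * PI / INR N).

Lemma Cmod_root_of_unity_pow N m : Cmod (pow_n (root_of_unity N) m) = 1.
Proof. unfold root_of_unity. rewrite pow_n_cis. apply Cmod_cis. Qed.

Lemma root_of_unity_pow_N N : (0 < N)%nat -> pow_n (root_of_unity N) N = RtoC 1.
Proof.
  intros HN. apply lt_0_INR in HN. unfold root_of_unity. rewrite pow_n_cis.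
  replace (INR N * (2 * PI / INR N)) with (2 * PI) by (field; lra).
  unfold cis. rewrite cos_2PI, sin_2PI. reflexivity.
Qed.

Lemma root_of_unity_pow_neq_1 N m :
  (0 < m < 2 * N)%nat -> m <> N -> pow_n (root_of_unity N) m <> RtoC 1.
Proof.
  intros Hm Hne. unfold root_of_unity. rewrite pow_n_cis. pose proof PI_RGT_0.
  assert (HN : 0 < INR N) by (apply lt_0_INR; lia).
  assert (Hm0 : 0 < INR m) by (apply lt_0_INR; lia).
  assert (Hm2 : INR m < INR 2 * INR N) by (rewrite <- mult_INR; apply lt_INR; lia).
  set (th := 2 * PI / INR N).
  assert (Hth : 0 < th) by (apply Rdiv_lt_0_compat; lra).
  assert (E : INR N * th = 2 * PI) by (unfold th; field; lra).
  simpl in Hm2. apply cis_neq_1; [split; nra|].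
  intros Habs. apply Hne, INR_eq, (Rmult_eq_reg_r th); lra.
Qed.

Lemma sub_1_mult_sum_pow_n (a : C) n :
  Cmult (Cminus a (RtoC 1)) (sum_n (pow_n a) n) = Cminus (pow_n a (S n)) (RtoC 1).
Proof.
  induction n as [|n IH]; [rewrite sum_O; simpl; ring_C|].
  rewrite sum_Sn. change (pow_n a (S (S n))) with (Cmult a (pow_n a (S n))).
  change (plus ?x ?y) with (Cplus x y). rewrite Cmult_plus_distr_l, IH. ring_C.
Qed.

Lemma sum_pow_n_root_of_1 (a : C) n :
  a <> RtoC 1 -> pow_n a (S n) = RtoC 1 -> sum_n (pow_n a) n = RtoC 0.
Proof.
  intros H1 H2. pose proof (sub_1_mult_sum_pow_n a n) as E. rewrite H2 in E.
  assert (Hne : Cminus a (RtoC 1) <> RtoC 0).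
  { intros Hc. apply H1. replace a with (Cplus (Cminus a (RtoC 1)) (RtoC 1)) by ring_C.
    rewrite Hc. ring_C. }
  set (s := sum_n (pow_n a) n) in *. clearbody s.
  replace s with (Cmult (Cinv (Cminus a (RtoC 1))) (Cmult (Cminus a (RtoC 1)) s))
    by (field; exact Hne).
  rewrite E. ring_C.
Qed.

Lemma RtoC_plus (a b : R) : RtoC (a + b) = Cplus (RtoC a) (RtoC b).
Proof. unfold RtoC, Cplus. cbn [fst snd]. f_equal; ring. Qed.

Lemma sum_n_RtoC_1 n : sum_n (fun _ => RtoC 1) n = RtoC (INR (S n)).
Proof.
  induction n as [|n IH]; [now rewrite sum_O|].
  rewrite sum_Sn, IH, (S_INR (S n)), RtoC_plus. reflexivity.
Qed.

Lemma Cmod_average_le (u : nat -> C) N bound : (0 < N)%nat -> (forall j, Cmod (u j) <= bound) ->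
  Cmod (Cmult (RtoC (/ INR N)) (sum_n u (pred N))) <= bound.
Proof.
  intros HN Hu. assert (HN' : 0 < INR N) by (apply lt_0_INR; lia).
  assert (HN'' : 0 < / INR N) by (apply Rinv_0_lt_compat; lra).
  rewrite Cmod_mult, Cmod_RtoC_nonneg by lra.
  apply Rle_trans with (/ INR N * (INR N * bound)); [|right; field; lra].
  apply Rmult_le_compat_l; [lra|].
  replace (INR N) with (INR (S (pred N))) by (f_equal; lia).
  rewrite <- sum_n_const. apply Cmod_sum_n_le, Hu.
Qed.

(* The cast to [C] types this [sum_n] like those produced by [sum_n_Cmult_l], so that
   [ring_C] abstracts them as the same atom. *)
Definition dft_weight (N k n : nat) : C :=
  Cmult (RtoC (/ INR N))
    (sum_n (fun j => pow_n (pow_n (root_of_unity N) (n + N - k)) j : C) (pred N)).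

Lemma dft_weight_diag N k : (k < N)%nat -> dft_weight N k k = RtoC 1.
Proof.
  intros Hk. assert (HN : 0 < INR N) by (apply lt_0_INR; lia).
  unfold dft_weight. replace (k + N - k)%nat with N by lia.
  rewrite root_of_unity_pow_N by lia.
  rewrite (sum_n_ext _ (fun _ => RtoC 1)) by (intros; apply pow_n_one).
  rewrite sum_n_RtoC_1, <- RtoC_mult. replace (S (pred N)) with N by lia.
  now rewrite Rinv_l by lra.
Qed.

Lemma dft_weight_off N k n : (k < N)%nat -> (n < N)%nat -> n <> k -> dft_weight N k n = RtoC 0.
Proof.
  intros Hk Hn Hnk. unfold dft_weight.
  rewrite sum_pow_n_root_of_1; [ring_C | apply root_of_unity_pow_neq_1; lia |].
  replace (S (pred N)) with N by lia.
  rewrite pow_n_pow_n, Nat.mul_comm, <- pow_n_pow_n, root_of_unity_pow_N by lia.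
  apply pow_n_one.
Qed.

Lemma Cmod_dft_weight_le N k n : (0 < N)%nat -> Cmod (dft_weight N k n) <= 1.
Proof.
  intros HN. apply Cmod_average_le; [exact HN|]. intros j.
  rewrite pow_n_pow_n, Cmod_root_of_unity_pow. lra.
Qed.

(* [(1/N) sum_j w^(-jk) a(r w^j)] for [w = exp(2 pi i / N)], with [w^(-jk)] written
   [w^(j(N-k))]; it equals the sum of the [a_n r^n] over [n = k mod N]. *)
Definition dft_sample (a : coef) (r : R) (N k : nat) : C :=
  Cmult (RtoC (/ INR N))
    (sum_n (fun j => Cmult (pow_n (root_of_unity N) (j * (N - k)))
                           (evalA a (Cmult (RtoC r) (pow_n (root_of_unity N) j)))) (pred N)).

Lemma is_CSeries_dft_sample a r N k : inA a -> 0 <= r < 1 -> (k < N)%nat ->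
  is_CSeries (fun n => Cmult (Cmult (a n) (pow_n (RtoC r) n)) (dft_weight N k n))
             (dft_sample a r N k).
Proof.
  intros Ha Hr Hk. set (om := root_of_unity N).
  assert (Hj : forall j, is_CSeries
      (fun n => Cmult (pow_n om (j * (N - k))) (Cmult (a n) (pow_n (Cmult (RtoC r) (pow_n om j)) n)))
      (Cmult (pow_n om (j * (N - k))) (evalA a (Cmult (RtoC r) (pow_n om j))))).
  { intros j. apply is_CSeries_scal, CSeries_correct, Ha.
    unfold om. rewrite Cmod_mult, Cmod_root_of_unity_pow, Cmod_RtoC_nonneg; lra. }
  eapply is_series_ext;
    [|exact (is_CSeries_scal _ _ _ (is_CSeries_sum_n _ _ (pred N) Hj))].
  intros n. unfold dft_weight. fold om.
  rewrite (sum_n_ext _ (fun j => Cmult (Cmult (a n) (pow_n (RtoC r) n))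
                                       (pow_n (pow_n om (n + N - k)) j))).
  - rewrite sum_n_Cmult_l. ring_C.
  - intros j. rewrite pow_n_Cmult, !pow_n_pow_n.
    replace ((n + N - k) * j)%nat with (j * (N - k) + j * n)%nat by nia.
    rewrite pow_n_plus. ring_C.
Qed.

Lemma Cmod_dft_sample_le a r N k eps : (0 < N)%nat -> 0 <= r ->
  (forall z, Cmod z <= r -> Cmod (evalA a z) <= eps) -> Cmod (dft_sample a r N k) <= eps.
Proof.
  intros HN Hr Heps. apply Cmod_average_le; [exact HN|]. intros j.
  rewrite Cmod_mult, Cmod_root_of_unity_pow, Rmult_1_l. apply Heps.
  rewrite Cmod_mult, Cmod_root_of_unity_pow, Cmod_RtoC_nonneg; lra.
Qed.

Lemma Rle_pow_le_1 p m n : 0 <= p <= 1 -> (m <= n)%nat -> p ^ n <= p ^ m.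
Proof.
  intros Hp Hmn. induction Hmn as [|n _ IH]; [lra|].
  simpl. pose proof (pow_le p n (proj1 Hp)). nra.
Qed.

Lemma dft_aliasing_le (a : coef) r s M p N k n :
  0 <= r -> 0 < s -> coef_bound a s M -> 0 <= p < 1 -> r / s <= p * p -> (k < N)%nat ->
  Cmod (Cminus (Cmult (Cmult (a n) (pow_n (RtoC r) n)) (dft_weight N k n))
               (if Nat.eqb n k then Cmult (a k) (pow_n (RtoC r) k) else RtoC 0))
  <= M * p ^ N * p ^ n.
Proof.
  intros Hr Hs HM Hp Hrs Hk.
  assert (Hrhs : 0 <= M * p ^ N * p ^ n)
    by (pose proof (coef_bound_ge0 _ _ _ HM); pose proof (pow_le p N); pose proof (pow_le p n);
        apply Rmult_le_pos; [apply Rmult_le_pos|]; auto; lra).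
  destruct (Nat.eqb_spec n k) as [->|Hnk].
  - rewrite dft_weight_diag by exact Hk.
    replace (Cminus _ _) with (RtoC 0) by ring_C. now rewrite Cmod_0.
  - destruct (Nat.lt_ge_cases n N) as [HnN|HnN].
    + rewrite dft_weight_off by auto.
      replace (Cminus _ _) with (RtoC 0) by ring_C. now rewrite Cmod_0.
    + replace (Cminus _ _) with (Cmult (Cmult (a n) (pow_n (RtoC r) n)) (dft_weight N k n))
        by ring_C.
      rewrite Cmod_mult. pose proof (Cmod_dft_weight_le N k n ltac:(lia)).
      pose proof (Cmod_ge_0 (Cmult (a n) (pow_n (RtoC r) n))).
      apply Rle_trans with (Cmod (Cmult (a n) (pow_n (RtoC r) n))); [nra|].
      eapply Rle_trans; [apply (Cmod_term_le a s M r); auto; rewrite Cmod_RtoC_nonneg; lra|].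
      rewrite Rmult_assoc. apply Rmult_le_compat_l; [exact (coef_bound_ge0 _ _ _ HM)|].
      apply Rle_trans with ((p * p) ^ n).
      * apply pow_incr. split; [apply Rdiv_le_0_compat|]; lra.
      * rewrite Rpow_mult_distr. apply Rmult_le_compat_r; [apply pow_le; lra|].
        apply Rle_pow_le_1; [lra | lia].
Qed.

Lemma dft_coef_estimate (a : coef) r s M p eps N k :
  inA a -> 0 < r < 1 -> 0 < s -> coef_bound a s M -> 0 <= p < 1 -> r / s <= p * p ->
  (forall z, Cmod z <= r -> Cmod (evalA a z) <= eps) -> (k < N)%nat ->
  Cmod (a k) * r ^ k <= eps + M * p ^ N / (1 - p).
Proof.
  intros Ha Hr Hs HM Hp Hrs Heps Hk.
  set (ak := Cmult (a k) (pow_n (RtoC r) k)).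
  set (S := dft_sample a r N k).
  destruct (is_CSeries_geom _ (M * p ^ N) p Hp
              (fun n => dft_aliasing_le a r s M p N k n ltac:(lra) Hs HM Hp Hrs Hk)) as [l [Hl Hlb]].
  assert (El : l = Cminus S ak).
  { rewrite <- (CSeries_unique _ _ Hl). apply CSeries_unique.
    exact (is_series_minus _ _ _ _ (is_CSeries_dft_sample a r N k Ha ltac:(lra) Hk)
                                   (is_CSeries_delta ak k)). }
  replace (Cmod (a k) * r ^ k) with (Cmod ak)
    by (unfold ak; rewrite Cmod_mult, Cmod_pow_n, Cmod_RtoC_nonneg; lra).
  replace ak with (Cminus S (Cminus S ak)) by ring_C.
  unfold Cminus at 1. eapply Rle_trans; [apply Cmod_triangle|]. rewrite Cmod_opp, <- El.
  pose proof (Cmod_dft_sample_le a r N k eps ltac:(lia) ltac:(lra) Heps) as HS. fold S in HS. lra.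
Qed.

Lemma cauchy_estimate (a : coef) r eps : inA a -> 0 < r < 1 ->
  (forall z, Cmod z <= r -> Cmod (evalA a z) <= eps) -> coef_bound a r eps.
Proof.
  intros Ha Hr Heps k.
  set (s := (1 + r) / 2). set (p := (1 + r / s) / 2).
  destruct (inA_coef_bound a s Ha ltac:(unfold s; lra)) as [M HM].
  pose proof (coef_bound_ge0 _ _ _ HM).
  assert (Hq : 0 < r / s < 1)
    by (split; [apply Rdiv_lt_0_compat | apply (Rdiv_lt_1 _ s)]; unfold s; lra).
  assert (Hp : 0 <= p < 1) by (unfold p; lra).
  assert (Hpp : r / s <= p * p) by (unfold p; nra).
  apply Rnot_lt_le. intros Hgt.
  set (gap := Cmod (a k) * r ^ k - eps).
  assert (Hy : 0 < gap * (1 - p) / (M + 1))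
    by (apply Rdiv_lt_0_compat; [apply Rmult_lt_0_compat|]; unfold gap; lra).
  destruct (pow_lt_1_zero p ltac:(rewrite Rabs_pos_eq; lra) _ Hy) as [N0 HN0].
  set (N := S (N0 + k)).
  specialize (HN0 N ltac:(unfold N; lia)). rewrite Rabs_pos_eq in HN0 by (apply pow_le; lra).
  pose proof (dft_coef_estimate a r s M p eps N k Ha Hr ltac:(unfold s; lra) HM Hp Hpp Heps
                ltac:(unfold N; lia)) as B.
  assert (HpN : (M + 1) * p ^ N < gap * (1 - p)).
  { apply (Rmult_lt_compat_l (M + 1)) in HN0; [|lra].
    replace ((M + 1) * (gap * (1 - p) / (M + 1))) with (gap * (1 - p)) in HN0 by (field; lra).
    exact HN0. }
  assert (M * p ^ N / (1 - p) < gap).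
  { apply (Rmult_lt_reg_r (1 - p)); [lra|]. unfold Rdiv.
    rewrite Rmult_assoc, Rinv_l, Rmult_1_r by lra. pose proof (pow_le p N). nra. }
  unfold gap in *. lra.
Qed.

Lemma ex_CSeries_minus (f1 f2 : coef) z :
  ex_CSeries (ps_terms f1 z) -> ex_CSeries (ps_terms f2 z) ->
  is_CSeries (ps_terms (fun k => Cminus (f1 k) (f2 k)) z) (Cminus (evalA f1 z) (evalA f2 z)).
Proof.
  intros H1 H2.
  eapply is_series_ext; [|exact (is_series_minus _ _ _ _ (CSeries_correct _ H1) (CSeries_correct _ H2))].
  intros k. simpl. ring_C.
Qed.

Lemma inA_minus (f1 f2 : coef) : inA f1 -> inA f2 -> inA (fun k => Cminus (f1 k) (f2 k)).
Proof. intros H1 H2 z Hz. eexists. apply ex_CSeries_minus; auto. Qed.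

Lemma evalA_minus (f1 f2 : coef) z :
  ex_CSeries (ps_terms f1 z) -> ex_CSeries (ps_terms f2 z) ->
  evalA (fun k => Cminus (f1 k) (f2 k)) z = Cminus (evalA f1 z) (evalA f2 z).
Proof. intros H1 H2. apply CSeries_unique, ex_CSeries_minus; auto. Qed.

Lemma hadamard_minus_l (f1 f2 g : coef) :
  hadamard (fun k => Cminus (f1 k) (f2 k)) g
  = (fun k => Cminus (hadamard f1 g k) (hadamard f2 g k)).
Proof. apply functional_extensionality. intros k. unfold hadamard. ring_C. Qed.

Lemma evalA_hadamard_perturb (g f1 f2 : coef) R' G r eps rho (w : C) :
  0 < R' -> coef_bound g R' G -> 0 < r < 1 -> inA f1 -> inA f2 ->
  (forall z, Cmod z <= r -> Cmod (Cminus (evalA f1 z) (evalA f2 z)) <= eps) ->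
  Cmod w <= rho -> rho < r * R' ->
  Cmod (Cminus (evalA (hadamard f1 g) w) (evalA (hadamard f2 g) w))
  <= eps * G / (1 - rho / (r * R')).
Proof.
  intros HR HG Hr H1 H2 He Hw Hrho.
  assert (Ht : 0 < r * R') by nra.
  assert (Hd : coef_bound (fun k => Cminus (f1 k) (f2 k)) r eps).
  { apply cauchy_estimate; [apply inA_minus; auto | exact Hr |].
    intros z Hz. rewrite evalA_minus; [apply He; auto | apply H1 | apply H2]; lra. }
  assert (Hconv : forall f, inA f -> ex_CSeries (ps_terms (hadamard f g) w)).
  { intros f Hf. destruct (inA_coef_bound f r Hf ltac:(lra)) as [M HM]. eexists.
    apply (evalA_coef_bound _ (r * R') (M * G) rho); auto.
    apply coef_bound_hadamard; auto; lra. }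
  rewrite <- evalA_minus, <- hadamard_minus_l by auto.
  apply (evalA_coef_bound _ (r * R')); auto.
  apply coef_bound_hadamard; auto; lra.
Qed.

Lemma Cmod_pow_n_sub_le (w1 w2 : C) rho k : Cmod w1 <= rho -> Cmod w2 <= rho ->
  Cmod (Cminus (pow_n w1 (S k)) (pow_n w2 (S k))) <= INR (S k) * rho ^ k * Cmod (Cminus w1 w2).
Proof.
  intros H1 H2. pose proof (Cmod_ge_0 w1). pose proof (Cmod_ge_0 w2).
  pose proof (Cmod_ge_0 (Cminus w1 w2)).
  induction k as [|k IH].
  - simpl. replace (Cminus _ _) with (Cminus w1 w2) by ring_C. lra.
  - change (pow_n w1 (S (S k))) with (Cmult w1 (pow_n w1 (S k))).
    change (pow_n w2 (S (S k))) with (Cmult w2 (pow_n w2 (S k))).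
    replace (Cminus (Cmult w1 (pow_n w1 (S k))) (Cmult w2 (pow_n w2 (S k)))) with
      (Cplus (Cmult w1 (Cminus (pow_n w1 (S k)) (pow_n w2 (S k))))
             (Cmult (Cminus w1 w2) (pow_n w2 (S k)))) by ring_C.
    eapply Rle_trans; [apply Cmod_triangle|]. rewrite !Cmod_mult, Cmod_pow_n.
    pose proof (Cmod_ge_0 (Cminus (pow_n w1 (S k)) (pow_n w2 (S k)))).
    assert (A1 : Cmod w1 * Cmod (Cminus (pow_n w1 (S k)) (pow_n w2 (S k)))
                 <= rho * (INR (S k) * rho ^ k * Cmod (Cminus w1 w2)))
      by (apply Rmult_le_compat; auto).
    assert (A2 : Cmod w2 ^ S k <= rho ^ S k) by (apply pow_incr; lra).
    rewrite (S_INR (S k)). simpl pow in *. nra.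
Qed.

Lemma pow_sub_pow_ge rho sigma k : 0 <= rho <= sigma ->
  (sigma - rho) * (INR (S k) * rho ^ k) <= sigma ^ S k - rho ^ S k.
Proof.
  intros H. induction k as [|k IH]; [simpl; lra|].
  rewrite S_INR. simpl pow in *.
  pose proof (pow_le rho k (proj1 H)). pose proof (pos_INR (S k)).
  assert (0 <= (sigma - rho) * (INR (S k) * rho ^ k)) by (apply Rmult_le_pos; [lra | nra]).
  nra.
Qed.

Lemma Cmod_term_sub_le (F : coef) t M rho sigma (w1 w2 : C) k :
  coef_bound F t M -> 0 < t -> 0 <= rho < sigma -> Cmod w1 <= rho -> Cmod w2 <= rho ->
  Cmod (Cminus (Cmult (F k) (pow_n w1 k)) (Cmult (F k) (pow_n w2 k)))
  <= M / (sigma - rho) * Cmod (Cminus w1 w2) * (sigma / t) ^ k.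
Proof.
  intros HF Ht Hr H1 H2.
  pose proof (coef_bound_ge0 _ _ _ HF). set (c := Cmod (Cminus w1 w2)).
  assert (Hc : 0 <= c) by apply Cmod_ge_0.
  destruct k as [|k].
  - replace (Cminus _ _) with (RtoC 0) by (cbn [pow_n]; ring_C). rewrite Cmod_0. simpl.
    rewrite Rmult_1_r. apply Rmult_le_pos; [apply Rdiv_le_0_compat|]; lra.
  - replace (Cminus _ _) with (Cmult (F (S k)) (Cminus (pow_n w1 (S k)) (pow_n w2 (S k))))
      by ring_C.
    rewrite Cmod_mult. set (A := Cmod (F (S k))). set (E := INR (S k) * rho ^ k).
    pose proof (Cmod_pow_n_sub_le w1 w2 rho k H1 H2) as HB. fold c E in HB.
    pose proof (pow_sub_pow_ge rho sigma k ltac:(lra)) as HE. fold E in HE.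
    pose proof (coef_bound_rescale F t M sigma (S k) HF Ht ltac:(lra)) as HA. fold A in HA.
    assert (HA0 : 0 <= A) by apply Cmod_ge_0.
    pose proof (pow_le rho (S k) ltac:(lra)).
    apply (Rmult_le_reg_r (sigma - rho)); [lra|].
    replace (M / (sigma - rho) * c * (sigma / t) ^ S k * (sigma - rho))
      with (M * (sigma / t) ^ S k * c) by (field; lra).
    apply Rle_trans with (A * (E * c) * (sigma - rho)); [apply Rmult_le_compat_r; [lra|];
      apply Rmult_le_compat_l; auto|].
    apply Rle_trans with (A * sigma ^ S k * c).
    { replace (A * (E * c) * (sigma - rho)) with (A * c * ((sigma - rho) * E)) by ring.
      replace (A * sigma ^ S k * c) with (A * c * sigma ^ S k) by ring.
      apply Rmult_le_compat_l; [apply Rmult_le_pos|]; lra. }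
    apply Rmult_le_compat_r; auto.
Qed.

Lemma evalA_lipschitz (F : coef) t M rho : coef_bound F t M -> 0 < rho < t ->
  exists L, 0 < L /\ forall w1 w2, Cmod w1 <= rho -> Cmod w2 <= rho ->
    Cmod (Cminus (evalA F w1) (evalA F w2)) <= L * Cmod (Cminus w1 w2).
Proof.
  intros HF Hr. set (sigma := (rho + t) / 2).
  assert (Hq : 0 <= sigma / t < 1)
    by (split; [apply Rdiv_le_0_compat | apply (Rdiv_lt_1 _ t)]; unfold sigma; lra).
  set (L0 := M / (sigma - rho) / (1 - sigma / t)).
  assert (HL0 : 0 <= L0).
  { pose proof (coef_bound_ge0 _ _ _ HF).
    apply Rdiv_le_0_compat; [apply Rdiv_le_0_compat|]; unfold sigma in *; lra. }
  exists (L0 + 1). split; [lra|]. intros w1 w2 H1 H2.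
  pose proof (Cmod_ge_0 (Cminus w1 w2)).
  destruct (evalA_coef_bound F t M rho w1 HF ltac:(lra) H1 ltac:(lra)) as [C1 _].
  destruct (evalA_coef_bound F t M rho w2 HF ltac:(lra) H2 ltac:(lra)) as [C2 _].
  destruct (is_CSeries_geom _ (M / (sigma - rho) * Cmod (Cminus w1 w2)) (sigma / t) Hq
              (fun k => Cmod_term_sub_le F t M rho sigma w1 w2 k HF ltac:(lra)
                          ltac:(unfold sigma; lra) H1 H2)) as [l [Hl Hb]].
  replace (Cminus (evalA F w1) (evalA F w2)) with l
    by (rewrite <- (CSeries_unique _ _ Hl); apply CSeries_unique;
        exact (is_series_minus _ _ _ _ C1 C2)).
  replace (M / (sigma - rho) * Cmod (Cminus w1 w2) / (1 - sigma / t))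
    with (L0 * Cmod (Cminus w1 w2)) in Hb by (unfold L0, sigma in *; field; lra).
  nra.
Qed.

Lemma Cmod_pair_le (a b : R) : Cmod (a, b) <= Rabs a + Rabs b.
Proof.
  pose proof (Rabs_pos a). pose proof (Rabs_pos b).
  unfold Cmod. cbn [fst snd]. rewrite <- (pow2_abs a), <- (pow2_abs b).
  rewrite <- (sqrt_pow2 (Rabs a + Rabs b)) by lra.
  apply sqrt_le_1_alt. nra.
Qed.

Lemma Cmod_sub_triangle (a b c : C) : Cmod (Cminus a c) <= Cmod (Cminus a b) + Cmod (Cminus b c).
Proof. replace (Cminus a c) with (Cplus (Cminus a b) (Cminus b c)) by ring_C. apply Cmod_triangle. Qed.

Lemma Cmod_sub_ge (a b : C) : Cmod a - Cmod b <= Cmod (Cminus a b).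
Proof.
  pose proof (Cmod_triangle (Cminus a b) b) as H.
  replace (Cplus (Cminus a b) b) with a in H by ring_C. lra.
Qed.

Lemma Cmod_sub_sym (a b : C) : Cmod (Cminus a b) = Cmod (Cminus b a).
Proof. replace (Cminus a b) with (Copp (Cminus b a)) by ring_C. apply Cmod_opp. Qed.

Lemma closed_disk_retract (w : C) :
  exists x : C, Cmod x <= 1 /\ Cmod (Cminus w x) <= Rmax 0 (Cmod w - 1).
Proof.
  destruct (Rle_or_lt (Cmod w) 1) as [H|H].
  - exists w. split; [exact H|]. replace (Cminus w w) with (RtoC 0) by ring_C.
    rewrite Cmod_0. apply Rmax_l.
  - exists (Cmult (RtoC (/ Cmod w)) w).
    assert (Hp : 0 < / Cmod w < 1)
      by (split; [apply Rinv_0_lt_compat | rewrite <- Rinv_1; apply Rinv_lt_contravar]; lra).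
    split.
    + rewrite Cmod_mult, Cmod_RtoC_nonneg by lra. right. field. lra.
    + replace (Cminus w (Cmult (RtoC (/ Cmod w)) w)) with (Cmult (RtoC (1 - / Cmod w)) w)
        by (rewrite RtoC_minus; ring_C).
      rewrite Cmod_mult, Cmod_RtoC_nonneg by lra.
      eapply Rle_trans; [|apply Rmax_r]. right. field. lra.
Qed.

(* Covering the square [-1,1]^2 by a gauge: near a point [t] of the disk the Lipschitz
   bound keeps [|F|] above [|F t| / 2]; points outside the disk are kept away from it. *)
Lemma closed_disk_min (F : C -> C) L : 0 < L ->
  (forall w1 w2, Cmod w1 <= 1 -> Cmod w2 <= 1 ->
     Cmod (Cminus (F w1) (F w2)) <= L * Cmod (Cminus w1 w2)) ->
  (forall w, Cmod w <= 1 -> F w <> RtoC 0) ->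
  exists m, 0 < m /\ forall w, Cmod w <= 1 -> m <= Cmod (F w).
Proof.
  intros HL HLip HF.
  set (D := fun u v : R => if Rle_dec (Cmod (u, v)) 1 then Cmod (F (u, v)) / (4 * L)
                           else (Cmod (u, v) - 1) / 2).
  assert (HD : forall u v, 0 < D u v).
  { intros u v. unfold D. destruct (Rle_dec (Cmod (u, v)) 1) as [H|H]; [|lra].
    apply Rdiv_lt_0_compat; [apply Cmod_gt_0, HF, H | lra]. }
  destruct (compactness_value_2d (-1) 1 (-1) 1 (fun u v => mkposreal (D u v) (HD u v)))
    as [d Hd].
  pose proof (cond_pos d).
  exists (2 * L * d). split; [nra|]. intros [x1 x2] Hx.
  pose proof (Rmax_Cmod (x1, x2)) as Hm. cbn [fst snd] in Hm.
  pose proof (Rmax_l (Rabs x1) (Rabs x2)). pose proof (Rmax_r (Rabs x1) (Rabs x2)).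
  apply Rnot_lt_le. intros Hlt.
  apply (Hd x1 x2); [apply Rabs_le_between; lra | apply Rabs_le_between; lra |].
  intros [u [v [_ [_ [Hu [Hv Hdu]]]]]]. cbn in Hu, Hv, Hdu.
  assert (Hxt : Cmod (Cminus (x1, x2) (u, v)) < 2 * D u v).
  { eapply Rle_lt_trans; [apply Cmod_pair_le|]. cbn. unfold Rminus in *. lra. }
  unfold D in *. destruct (Rle_dec (Cmod (u, v)) 1) as [Ht|Ht].
  - pose proof (HLip _ _ Hx Ht). pose proof (Cmod_sub_ge (F (u, v)) (F (x1, x2))).
    rewrite (Cmod_sub_sym (F (u, v))) in *.
    set (a := Cmod (F (u, v))) in *. set (q := a / (4 * L)) in *.
    assert (Eq : 4 * L * q = a) by (unfold q; field; lra). nra.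
  - pose proof (Cmod_sub_ge (u, v) (x1, x2)) as Hge. rewrite Cmod_sub_sym in Hge. lra.
Qed.

Lemma near_closed_disk_lower_bound (F : C -> C) L rho : 0 < L -> 1 < rho ->
  (forall w1 w2, Cmod w1 <= rho -> Cmod w2 <= rho ->
     Cmod (Cminus (F w1) (F w2)) <= L * Cmod (Cminus w1 w2)) ->
  (forall w, Cmod w <= 1 -> F w <> RtoC 0) ->
  exists m delta, 0 < m /\ 0 < delta /\ delta <= rho - 1 /\
    forall w, Cmod w < 1 + delta -> m <= Cmod (F w).
Proof.
  intros HL Hrho HLip HF.
  destruct (closed_disk_min F L HL (fun w1 w2 H1 H2 => HLip w1 w2 ltac:(lra) ltac:(lra)) HF)
    as [m [Hm Hmin]].
  pose proof (Rmin_l (rho - 1) (m / (2 * L))). pose proof (Rmin_r (rho - 1) (m / (2 * L))).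
  set (delta := Rmin (rho - 1) (m / (2 * L))) in *.
  assert (Hdelta : 0 < delta) by (apply Rmin_glb_lt; [|apply Rdiv_lt_0_compat]; lra).
  assert (HLd : L * delta <= m / 2).
  { apply Rle_trans with (L * (m / (2 * L))); [apply Rmult_le_compat_l; lra|].
    right. field. lra. }
  exists (m / 2), delta. split; [lra|]. split; [exact Hdelta|]. split; [lra|].
  intros w Hw.
  destruct (closed_disk_retract w) as [x [Hx Hwx]].
  assert (Hwx' : Cmod (Cminus w x) <= delta) by (eapply Rle_trans; [exact Hwx|]; apply Rmax_lub; lra).
  pose proof (HLip w x ltac:(lra) ltac:(lra)).
  pose proof (Cmod_sub_ge (F x) (F w)) as Hge. rewrite Cmod_sub_sym in Hge.
  assert (L * Cmod (Cminus w x) <= L * delta) by (apply Rmult_le_compat_l; lra).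
  pose proof (Hmin x Hx). lra.
Qed.

Lemma inAbar_coef_bound (g : coef) R : 1 < R ->
  (forall z, Cmod z < R -> ex_CSeries (ps_terms g z)) ->
  exists R' G, 1 < R' /\ 0 < G /\ coef_bound g R' G.
Proof.
  intros HR Hg. set (R' := (1 + R) / 2).
  destruct (ex_CSeries_coef_bound g (RtoC R')) as [G HG].
  { apply Hg. rewrite Cmod_RtoC_nonneg; unfold R'; lra. }
  rewrite Cmod_RtoC_nonneg in HG by (unfold R'; lra).
  pose proof (coef_bound_ge0 _ _ _ HG).
  exists R', (G + 1). split; [unfold R'; lra|]. split; [lra|].
  intros k. specialize (HG k). lra.
Qed.

Lemma hadamard_nonvanishing_near (f g : coef) R' G :
  inA f -> 1 < R' -> 0 < G -> coef_bound g R' G ->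
  (forall w, Cmod w <= 1 -> evalA (hadamard f g) w <> RtoC 0) ->
  exists r eps delta, 0 < r < 1 /\ 0 < eps /\ 0 < delta /\
    forall f', inA f' -> (forall z, Cmod z <= r -> Cmod (Cminus (evalA f' z) (evalA f z)) <= eps) ->
      forall w, Cmod w < 1 + delta -> evalA (hadamard f' g) w <> RtoC 0.
Proof.
  intros Hf HR' HG0 HG HF.
  set (r := (1 + R') / (2 * R')). set (t := r * R'). set (rho := (1 + t) / 2).
  assert (Ht : t = (1 + R') / 2) by (unfold t, r; field; lra).
  assert (Hr : 0 < r < 1)
    by (unfold r; split; [apply Rdiv_lt_0_compat | apply (Rdiv_lt_1 _ (2 * R'))]; lra).
  assert (Hrho : 1 < rho < t) by (unfold rho; lra).
  assert (Hq : 0 < 1 - rho / t) by (pose proof (proj1 (Rdiv_lt_1 rho t ltac:(lra)) (proj2 Hrho)); lra).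
  destruct (inA_coef_bound f r Hf ltac:(lra)) as [M HM].
  destruct (evalA_lipschitz (hadamard f g) t (M * G) rho
              (coef_bound_hadamard f g r R' M G ltac:(lra) ltac:(lra) HM HG) ltac:(lra))
    as [L [HL HLip]].
  destruct (near_closed_disk_lower_bound _ L rho HL (proj1 Hrho) HLip HF)
    as [m [delta [Hm [Hd [Hdr Hmin]]]]].
  set (eps := m * (1 - rho / t) / (2 * G)).
  exists r, eps, delta. split; [exact Hr|].
  split; [apply Rdiv_lt_0_compat; [apply Rmult_lt_0_compat|]; lra|]. split; [exact Hd|].
  intros f' Hf' Hclose w Hw Habs.
  pose proof (evalA_hadamard_perturb g f' f R' G r eps rho w ltac:(lra) HG Hr Hf' Hf Hclose
                ltac:(lra) ltac:(fold t; lra)) as P.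
  fold t in P. rewrite Habs in P.
  replace (eps * G / (1 - rho / t)) with (m / 2) in P by (unfold eps; field; lra).
  replace (Cminus (RtoC 0) (evalA (hadamard f g) w)) with (Copp (evalA (hadamard f g) w)) in P
    by ring_C.
  rewrite Cmod_opp in P. pose proof (Hmin w Hw). lra.
Qed.

Definition near_on_disk (r eps : R) (h : C -> C) (f : coef) : Prop :=
  inA f /\ exists eta, 0 < eta /\
    forall z, Cmod z <= r -> Cmod (Cminus (evalA f z) (h z)) <= eps - eta.

Lemma near_on_disk_open r eps h : 0 <= r < 1 -> openA (near_on_disk r eps h).
Proof.
  intros Hr f [Hf [eta [Heta Hz]]]. split; [exact Hf|].
  exists r, (eta / 2). split; [exact Hr|]. split; [lra|].
  intros g Hg Hc. split; [exact Hg|]. exists (eta / 2). split; [lra|]. intros z Hz'.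
  pose proof (Cmod_sub_triangle (evalA g z) (evalA f z) (h z)).
  pose proof (Hc z Hz'). pose proof (Hz z Hz'). lra.
Qed.

Lemma list_lower_bound {A : Type} (l : list A) (h : A -> R) :
  (forall i, 0 < h i) -> exists m, 0 < m /\ forall i, In i l -> m <= h i.
Proof.
  intros Hh. induction l as [|a l [m [Hm H]]].
  - exists 1. split; [lra | intros i []].
  - exists (Rmin m (h a)). split; [apply Rmin_glb_lt; auto|].
    intros i [<-|Hi]; [apply Rmin_r|]. eapply Rle_trans; [apply Rmin_l | auto].
Qed.

Lemma compactA_uniform (V : coef -> Prop) (P : R -> coef -> Prop) : compactA V ->
  (forall d d' f, 0 < d' <= d -> P d f -> P d' f) ->
  (forall f, V f -> exists (U : coef -> Prop) d, openA U /\ U f /\ 0 < d /\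
     forall f', U f' -> P d f') ->
  exists d, 0 < d /\ forall f, V f -> P d f.
Proof.
  intros [_ HV] Hmono Hloc.
  set (I := {U : coef -> Prop & {d : R | openA U /\ 0 < d /\ forall f', U f' -> P d f'}}).
  destruct (HV I (fun i => projT1 i) (fun i => proj1 (proj2_sig (projT2 i)))) as [l Hl].
  { intros f Hf. destruct (Hloc f Hf) as [U [d [HU [Hf' [Hd HP]]]]].
    exists (existT _ U (exist _ d (conj HU (conj Hd HP)))). exact Hf'. }
  destruct (list_lower_bound l (fun i : I => proj1_sig (projT2 i))) as [m [Hm Hmin]].
  { intros i. exact (proj1 (proj2 (proj2_sig (projT2 i)))). }
  exists m. split; [exact Hm|]. intros f Hf.
  destruct (Hl f Hf) as [i [Hi Hfi]]. specialize (Hmin i Hi).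
  destruct i as [U [d [HU [Hd HP]]]]. cbn in Hmin, Hfi.
  exact (Hmono d m f (conj Hm Hmin) (HP f Hfi)).
Qed.

Lemma compact_hadamard_nonvanishing (V : coef -> Prop) g R' G :
  (forall f, V f -> inA f) -> compactA V -> 1 < R' -> 0 < G -> coef_bound g R' G ->
  (forall f, V f -> forall w, Cmod w <= 1 -> evalA (hadamard f g) w <> RtoC 0) ->
  exists delta, 0 < delta /\
    forall f, V f -> forall w, Cmod w < 1 + delta -> evalA (hadamard f g) w <> RtoC 0.
Proof.
  intros HVA HV HR' HG0 HG HF.
  apply (compactA_uniform V (fun d f => forall w, Cmod w < 1 + d -> evalA (hadamard f g) w <> RtoC 0) HV).
  - intros d d' f Hd Hf w Hw. apply Hf. lra.
  - intros f Hf.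
    destruct (hadamard_nonvanishing_near f g R' G (HVA f Hf) HR' HG0 HG (HF f Hf))
      as [r [eps [delta [Hr [He [Hd Hnear]]]]]].
    exists (near_on_disk r eps (evalA f)), delta.
    split; [apply near_on_disk_open; lra|]. split; [|split; [exact Hd|]].
    + split; [exact (HVA f Hf)|]. exists eps. split; [exact He|]. intros z _.
      replace (Cminus _ _) with (RtoC 0) by ring_C. rewrite Cmod_0. lra.
    + intros f' [Hf' [eta [Heta Hz]]]. apply Hnear; [exact Hf'|].
      intros z Hz'. specialize (Hz z Hz'). lra.
Qed.

Lemma inA0_near_1 (f : coef) : inA0 f ->
  exists rho, 0 < rho < 1 /\ forall z, Cmod z <= rho -> Cmod (Cminus (evalA f z) (RtoC 1)) <= 1 / 4.
Proof.
  intros [Hf H0].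
  destruct (inA_coef_bound f (1 / 2) Hf ltac:(lra)) as [M HM].
  pose proof (coef_bound_ge0 _ _ _ HM).
  set (rho := / (8 * (M + 1))).
  assert (Hr : 0 < rho <= 1 / 8).
  { unfold rho. split; [apply Rinv_0_lt_compat; lra|].
    replace (1 / 8) with (/ 8) by field. apply Rinv_le_contravar; lra. }
  assert (HMr : 8 * (M + 1) * rho = 1) by (unfold rho; field; lra).
  exists rho. split; [lra|]. intros z Hz.
  destruct (evalA_coef_bound f (1 / 2) M rho z HM ltac:(lra) Hz ltac:(lra)) as [Hs _].
  assert (Htail : is_CSeries (fun k => Cmult (f (S k)) (pow_n z (S k)))
                             (Cminus (evalA f z) (RtoC 1))).
  { apply (is_series_incr_1 (ps_terms f z)).
    rewrite H0. replace (plus _ _) with (evalA f z) by (cbn [pow_n]; ring_C). exact Hs. }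
  destruct (is_CSeries_geom (fun k => Cmult (f (S k)) (pow_n z (S k))) (M * (2 * rho)) (2 * rho)
              ltac:(lra)) as [l [Hl Hb]].
  { intros k. pose proof (Cmod_term_le f (1 / 2) M rho z (S k) HM ltac:(lra) Hz) as T.
    replace (rho / (1 / 2)) with (2 * rho) in T by field. simpl pow in T. lra. }
  rewrite <- (CSeries_unique _ _ Htail), (CSeries_unique _ _ Hl).
  eapply Rle_trans; [exact Hb|].
  apply (Rmult_le_reg_r (1 - 2 * rho)); [lra|]. unfold Rdiv.
  rewrite Rmult_assoc, Rinv_l by lra. nra.
Qed.

Lemma compact_zero_free_disk (V : coef -> Prop) : (forall f, V f -> inA0 f) -> compactA V ->
  exists rho, 0 < rho < 1 /\ forall f, V f -> forall z, Cmod z <= rho -> evalA f z <> RtoC 0.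
Proof.
  intros HV HC.
  destruct (compactA_uniform V (fun d f => forall z, Cmod z <= d -> evalA f z <> RtoC 0) HC)
    as [d [Hd Hzf]].
  - intros d d' f Hd Hf z Hz. apply Hf. lra.
  - intros f Hf. destruct (inA0_near_1 f (HV f Hf)) as [rho [Hr Hnear]].
    exists (near_on_disk rho (1 / 2) (fun _ => RtoC 1)), rho.
    split; [apply near_on_disk_open; lra|]. split; [|split; [lra|]].
    + split; [exact (proj1 (HV f Hf))|]. exists (1 / 4). split; [lra|].
      intros z Hz. specialize (Hnear z Hz). lra.
    + intros f' [_ [eta [Heta Hz]]] z Hz' Habs. specialize (Hz z Hz'). rewrite Habs in Hz.
      replace (Cminus (RtoC 0) (RtoC 1)) with (Copp (RtoC 1)) in Hz by ring_C.
      rewrite Cmod_opp, Cmod_1 in Hz. lra.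
  - exists (Rmin d (1 / 2)). pose proof (Rmin_l d (1 / 2)). pose proof (Rmin_r d (1 / 2)).
    split; [split; [apply Rmin_glb_lt|]; lra|].
    intros f Hf z Hz. apply Hzf; [exact Hf | lra].
Qed.

Lemma Px_Px x y (f : coef) : Px x (Px y f) = Px (Cmult x y) f.
Proof. apply functional_extensionality. intros k. unfold Px. rewrite pow_n_Cmult. ring_C. Qed.

Lemma Px_1 (f : coef) : Px (RtoC 1) f = f.
Proof. apply functional_extensionality. intros k. unfold Px. rewrite pow_n_one. ring_C. Qed.

Lemma hadamard_Px_l x (f g : coef) : hadamard (Px x f) g = Px x (hadamard f g).
Proof. apply functional_extensionality. intros k. unfold hadamard, Px. ring_C. Qed.

Lemma hadamard_Px_r x (f g : coef) : hadamard f (Px x g) = Px x (hadamard f g).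
Proof. apply functional_extensionality. intros k. unfold hadamard, Px. ring_C. Qed.

Lemma evalA_Px x (a : coef) z : evalA (Px x a) z = evalA a (Cmult x z).
Proof. unfold evalA. apply CSeries_ext. intros k. unfold Px. rewrite pow_n_Cmult. ring_C. Qed.

Lemma evalA_hadamard_Px_1 x (f g : coef) :
  evalA (hadamard (Px x f) g) (RtoC 1) = evalA (hadamard f g) x.
Proof. rewrite hadamard_Px_l, evalA_Px. f_equal. ring_C. Qed.

Lemma ex_CSeries_Px x (a : coef) z :
  ex_CSeries (ps_terms a (Cmult x z)) -> ex_CSeries (ps_terms (Px x a) z).
Proof.
  intros [l Hl]. exists l. eapply is_series_ext; [|exact Hl].
  intros k. unfold Px. rewrite pow_n_Cmult. ring_C.
Qed.

Lemma Px_0 x (f : coef) : f 0%nat = RtoC 1 -> Px x f 0%nat = RtoC 1.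
Proof. intros H. unfold Px. rewrite H. cbn [pow_n]. ring_C. Qed.

Lemma dual_star_neq_singleton_e (V : coef -> Prop) : (forall f, V f -> inA0 f) -> compactA V ->
  ~ (forall h, dual_star V h <-> h = e_fun).
Proof.
  intros HV HC Htriv.
  destruct (compact_zero_free_disk V HV HC) as [rho [Hr Hzf]].
  set (g := fun k => RtoC (rho ^ k)).
  assert (Hg : dual_star V g).
  { split; [split|].
    - intros z Hz. pose proof (Cmod_ge_0 z).
      destruct (is_CSeries_geom (ps_terms g z) 1 rho ltac:(lra)) as [l [Hl _]]; [|exists l; exact Hl].
      intros k. unfold g. rewrite Cmod_mult, Cmod_pow_n, Cmod_RtoC_nonneg by (apply pow_le; lra).
      rewrite Rmult_1_l. pose proof (pow_le rho k ltac:(lra)).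
      assert (Cmod z ^ k <= 1) by (apply (Rle_pow_le_1 (Cmod z) 0); [lra | lia]). nra.
    - reflexivity.
    - intros f Hf z Hz.
      replace (hadamard f g) with (Px (RtoC rho) f)
        by (apply functional_extensionality; intros k; unfold Px, hadamard, g;
            now rewrite pow_n_RtoC).
      rewrite evalA_Px. apply Hzf; [exact Hf|].
      rewrite Cmod_mult, Cmod_RtoC_nonneg by lra. pose proof (Cmod_ge_0 z). nra. }
  apply Htriv, (f_equal (fun h => h 1%nat)) in Hg. unfold g, e_fun in Hg.
  apply (f_equal fst) in Hg. simpl in Hg. lra.
Qed.

Lemma dual_T_cm_dilation (V : coef -> Prop) g :
  (forall f, V f -> inA0 f) -> compactA V -> dual_T (cm V) g ->
  exists s, 1 < s /\ dual_star V (Px (RtoC s) g).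
Proof.
  intros HV HC [[[R [HR Hg]] Hg0] HT].
  destruct (inAbar_coef_bound g R HR Hg) as [R' [G [HR' [HG0 HG]]]].
  assert (HF : forall f, V f -> forall w, Cmod w <= 1 -> evalA (hadamard f g) w <> RtoC 0).
  { intros f Hf w Hw. rewrite <- evalA_hadamard_Px_1. apply HT. now exists f, w. }
  destruct (compact_hadamard_nonvanishing V g R' G (fun f Hf => proj1 (HV f Hf)) HC HR' HG0 HG HF)
    as [delta [Hd Hnz]].
  pose proof (Rmin_l delta (R - 1)). pose proof (Rmin_r delta (R - 1)).
  assert (Hm : 0 < Rmin delta (R - 1)) by (apply Rmin_glb_lt; lra).
  set (s := 1 + Rmin delta (R - 1) / 2) in *.
  assert (Hsz : forall z, Cmod z < 1 -> Cmod (Cmult (RtoC s) z) < s).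
  { intros z Hz. rewrite Cmod_mult, Cmod_RtoC_nonneg by (unfold s; lra).
    pose proof (Cmod_ge_0 z). unfold s in *. nra. }
  exists s. split; [unfold s; lra|]. split; [split|].
  - intros z Hz. apply ex_CSeries_Px, Hg. specialize (Hsz z Hz). unfold s in *. lra.
  - now apply Px_0.
  - intros f Hf z Hz. rewrite hadamard_Px_r, evalA_Px. apply Hnz; [exact Hf|].
    specialize (Hsz z Hz). unfold s in *. lra.
Qed.

Lemma Px_dual_star_dual_T (V : coef -> Prop) g x :
  Cmod x < 1 -> dual_star V g -> dual_T (cm V) (Px x g).
Proof.
  intros Hx [[Hg Hg0] Hnz]. pose proof (Cmod_ge_0 x).
  set (R := 2 / (1 + Cmod x)).
  assert (ER : R * (1 + Cmod x) = 2) by (unfold R; field; lra).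
  split; [split|].
  - exists R. split; [nra|]. intros z Hz. apply ex_CSeries_Px, Hg.
    rewrite Cmod_mult. pose proof (Cmod_ge_0 z). nra.
  - now apply Px_0.
  - intros h [f [y [Hf [Hy ->]]]].
    rewrite evalA_hadamard_Px_1, hadamard_Px_r, evalA_Px. apply Hnz; [exact Hf|].
    rewrite Cmod_mult. pose proof (Cmod_ge_0 y). nra.
Qed.

Theorem theorem6 (V : coef -> Prop) :
  (forall f, V f -> inA0 f) ->
  compactA V ->
  forall g : coef,
    bor (dual_star V) g <-> (dual_star V g /\ ~ dual_T (cm V) g).
Proof.
  intros HV HC g.
  pose proof (dual_star_neq_singleton_e V HV HC) as Hne.
  split.
  - intros [[Htriv _] | [_ [Hg Hbor]]]; [contradiction|].
    split; [exact Hg|]. intros HT.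
    destruct (dual_T_cm_dilation V g HV HC HT) as [s [Hs Hgs]].
    assert (Hinv : Cmod (RtoC (/ s)) < 1).
    { rewrite Cmod_RtoC_nonneg by (left; apply Rinv_0_lt_compat; lra).
      rewrite <- Rinv_1. apply Rinv_lt_contravar; lra. }
    assert (Hdil : g = Px (RtoC (/ s)) (Px (RtoC s) g))
      by (rewrite Px_Px, <- RtoC_mult, Rinv_l, Px_1 by lra; reflexivity).
    pose proof (Hbor _ _ Hgs (Rlt_le _ _ Hinv) Hdil). lra.
  - intros [Hg HnT]. right. split; [exact Hne|]. split; [exact Hg|].
    intros g' x Hg' Hx Hdil. destruct (Req_dec (Cmod x) 1) as [E|Hlt]; [exact E|].
    exfalso. apply HnT. rewrite Hdil. apply Px_dual_star_dual_T; [lra | exact Hg'].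
Qed.
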